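(* Let $\omega=-\frac12+i\frac{\sqrt3}{2}$. Let $T$ be a triangle with vertices $A=a_1+a_2\omega$, $B=b_1+b_2\omega$ and $C=0$, where $a_1,a_2,b_1,b_2$ are nonnegative integers, and suppose $T$ is equable. Then each of the side lengths $|AC|$, $|BC|$, $|AB|$ of $T$ is of the form $\sqrt3\,n$ for some positive integer $n$.
   Context: A triangle is a non-degenerate triangle in the plane $\mathbb{C}\cong\mathbb{R}^2$. A triangle is called equable if its perimeter equals its area. *)

(* points of the plane C ~ R^2 are pairs of reals. *)
From Stdlib Require Import Reals Lra.
Open Scope R_scope.

Definition pt := (R * R)%type.

(* omega = -1/2 + i sqrt3/2 ; the point x + y*omega *)
Definition eis (x y : nat) : pt :=
  (INR x - INR y / 2, INR y * sqrt 3 / 2).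

Definition edist (P Q : pt) : R :=
  sqrt ((fst P - fst Q)^2 + (snd P - snd Q)^2).

Definition tri_area (P Q S : pt) : R :=
  Rabs ((fst Q - fst P) * (snd S - snd P) - (fst S - fst P) * (snd Q - snd P)) / 2.

Definition perimeter (P Q S : pt) : R := edist P Q + edist Q S + edist S P.

Definition nondegenerate (P Q S : pt) : Prop := tri_area P Q S <> 0.

Definition equable (P Q S : pt) : Prop :=
  nondegenerate P Q S /\ perimeter P Q S = tri_area P Q S.

(* Write [d1, d2, d3] for the side lengths.  Since the vertices are Eisenstein integers,
   each [d_i^2] is an integer (the norm [x^2 - x y + y^2] of a difference), while the area is
   [sqrt 3 / 4] times an integer.  Thus [u_i := sqrt 3 * d_i] have integer squares [3 d_i^2]
   and, by equability, a rational sum.  Squaring twice shows that a sum of three square roots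
   of rationals can only be rational if each summand is, so every [u_i] is a rational square
   root of [3 d_i^2], hence an integer, hence a multiple of 3: [d_i = sqrt 3 * n_i]. *)

From Stdlib Require Import Reals Lra Lia ZArith Znumtheory QArith Qreals.
Open Scope R_scope.

Definition rational (x : R) : Prop := exists q : Q, Q2R q = x.

Lemma rational_IZR (z : Z) : rational (IZR z).
Proof. exists (inject_Z z). unfold Q2R; simpl. field. Qed.

Lemma rational_plus (x y : R) : rational x -> rational y -> rational (x + y).
Proof. intros [p <-] [q <-]. exists (p + q)%Q. apply Q2R_plus. Qed.

Lemma rational_opp (x : R) : rational x -> rational (- x).
Proof. intros [p <-]. exists (- p)%Q. apply Q2R_opp. Qed.

Lemma rational_mult (x y : R) : rational x -> rational y -> rational (x * y).
Proof. intros [p <-] [q <-]. exists (p * q)%Q. apply Q2R_mult. Qed.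

Lemma rational_inv (x : R) : rational x -> rational (/ x).
Proof.
  intros [p <-].
  destruct (Qeq_dec p 0) as [Hp | Hp].
  - exists 0%Q. rewrite (Qeq_eqR _ _ Hp), RMicromega.Q2R_0, Rinv_0. reflexivity.
  - exists (/ p)%Q. apply Q2R_inv, Hp.
Qed.

Lemma rational_pow (x : R) (n : nat) : rational x -> rational (x ^ n).
Proof.
  intro Hx. induction n as [|n IH]; simpl.
  - exists 1%Q. apply RMicromega.Q2R_1.
  - apply rational_mult; assumption.
Qed.

Local Hint Resolve rational_IZR rational_plus rational_opp rational_mult rational_inv rational_pow
  : rational.

Lemma rational_of_sum_of_sqrts (u v w : R) :
  0 <= u -> 0 <= v -> 0 < w ->
  rational (u ^ 2) -> rational (v ^ 2) -> rational (w ^ 2) -> rational (u + v + w) ->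
  rational w.
Proof.
  intros Hu Hv Hw QU QV QW QR.
  set (r := u + v + w) in QR.
  set (s := r ^ 2 + w ^ 2 - u ^ 2 - v ^ 2).
  (* Squaring [u + v = r - w] gives [2 u v = s - 2 r w]; squaring again isolates [w]. *)
  assert (Hs : s = 2 * (u * v + r * w)) by (unfold s, r; ring).
  assert (Hr : 0 < r) by (unfold r; lra).
  assert (Hrs : 0 < r * s) by (rewrite Hs; apply Rmult_lt_0_compat; nra).
  assert (Hsqr2 : w * (4 * (r * s)) = s ^ 2 + 4 * r ^ 2 * w ^ 2 - 4 * u ^ 2 * v ^ 2).
  { assert (Huv : u * v = s / 2 - r * w) by (rewrite Hs; field).
    replace (4 * u ^ 2 * v ^ 2) with (4 * (u * v) ^ 2) by ring.
    rewrite Huv. field. }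
  replace w with ((s ^ 2 + 4 * r ^ 2 * w ^ 2 - 4 * u ^ 2 * v ^ 2) / (4 * (r * s))).
  - unfold s, Rdiv, Rminus. auto 20 with rational.
  - rewrite <- Hsqr2. field. split; nra.
Qed.

Lemma Z_divide_of_sqr_eq_mul_sqr (p q n : Z) : q <> 0%Z -> (p * p = n * (q * q))%Z -> (q | p)%Z.
Proof.
  intros Hq E.
  set (g := Z.gcd p q).
  assert (Hg : g <> 0%Z) by (intro H; apply Z.gcd_eq_0 in H; lia).
  destruct (Z.gcd_divide_l p q) as [p' Hp].
  destruct (Z.gcd_divide_r p q) as [q' Hq'].
  fold g in Hp, Hq'.
  assert (Hcop : Z.gcd p' q' = 1%Z).
  { replace p' with (p / g)%Z by (rewrite Hp, Z.div_mul; auto).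
    replace q' with (q / g)%Z by (rewrite Hq', Z.div_mul; auto).
    apply Z.gcd_div_gcd; auto. }
  assert (E' : (p' * p' = n * (q' * q'))%Z).
  { rewrite Hp, Hq' in E. apply (Z.mul_cancel_r _ _ (g * g)); nia. }
  assert (D : (q' | p' * p')%Z) by (exists (n * q')%Z; lia).
  apply Z.gauss in D; [|rewrite Z.gcd_comm; exact Hcop].
  rewrite Hp, Hq'. apply Z.mul_divide_mono_r, D.
Qed.

Lemma rational_sqrt_integer (x : R) (n : Z) :
  x ^ 2 = IZR n -> rational x -> exists k : Z, x = IZR k.
Proof.
  intros Hx [[p d] <-].
  unfold Q2R in *; simpl in *.
  assert (Hd : IZR (Z.pos d) <> 0) by (apply not_0_IZR; lia).
  assert (E : (p * p = n * (Z.pos d * Z.pos d))%Z).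
  { apply eq_IZR. rewrite !mult_IZR, <- Hx. field. exact Hd. }
  destruct (Z_divide_of_sqr_eq_mul_sqr p (Z.pos d) n ltac:(lia) E) as [k ->].
  exists k. rewrite mult_IZR. field. exact Hd.
Qed.

Lemma sqrt3_sqr : sqrt 3 ^ 2 = 3.
Proof. apply pow2_sqrt. lra. Qed.

Lemma sqrt3_pos : 0 < sqrt 3.
Proof. apply sqrt_lt_R0. lra. Qed.

Lemma sqrt3_multiple_of_rational (d : R) (n : Z) :
  0 < d -> d ^ 2 = IZR n -> rational (sqrt 3 * d) ->
  exists m : nat, (0 < m)%nat /\ d = sqrt 3 * INR m.
Proof.
  intros Hd Hn Hrat.
  pose proof sqrt3_pos as S.
  assert (Hsq : (sqrt 3 * d) ^ 2 = IZR (3 * n)).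
  { replace ((sqrt 3 * d) ^ 2) with (sqrt 3 ^ 2 * d ^ 2) by ring.
    rewrite sqrt3_sqr, Hn, mult_IZR. reflexivity. }
  destruct (rational_sqrt_integer _ _ Hsq Hrat) as [k Hk].
  assert (Hk3 : (3 | k)%Z).
  { assert (E : (k * k = 3 * n)%Z) by (apply eq_IZR; rewrite <- Hsq, mult_IZR, <- Hk; ring).
    assert (D : (3 | k * k)%Z) by (exists n; lia).
    destruct (prime_mult 3 prime_3 k k D) as [H | H]; exact H. }
  destruct Hk3 as [j ->].
  assert (Hdj : d = sqrt 3 * IZR j).
  { apply Rmult_eq_reg_l with (sqrt 3); [|lra].
    rewrite Hk, mult_IZR, <- Rmult_assoc, sqrt_sqrt by lra. ring. }
  assert (Hj : (0 < j)%Z) by (apply lt_IZR; nra).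
  exists (Z.to_nat j). split; [lia|].
  rewrite INR_IZR_INZ, Z2Nat.id by lia. exact Hdj.
Qed.

Lemma sqrt3_multiple_of_rational_sum (d1 d2 d3 : R) (n1 n2 n3 : Z) :
  0 < d1 -> 0 < d2 -> 0 < d3 ->
  d1 ^ 2 = IZR n1 -> d2 ^ 2 = IZR n2 -> d3 ^ 2 = IZR n3 ->
  rational (sqrt 3 * (d1 + d2 + d3)) ->
  exists m : nat, (0 < m)%nat /\ d3 = sqrt 3 * INR m.
Proof.
  intros H1 H2 H3 E1 E2 E3 Hsum.
  pose proof sqrt3_pos as S.
  assert (Hsq : forall d n, d ^ 2 = IZR n -> rational ((sqrt 3 * d) ^ 2)).
  { intros d n E. replace ((sqrt 3 * d) ^ 2) with (sqrt 3 ^ 2 * d ^ 2) by ring.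
    rewrite sqrt3_sqr, E. auto with rational. }
  apply (sqrt3_multiple_of_rational _ n3); auto.
  apply (rational_of_sum_of_sqrts (sqrt 3 * d1) (sqrt 3 * d2)); eauto; try nra.
  replace (sqrt 3 * d1 + sqrt 3 * d2 + sqrt 3 * d3) with (sqrt 3 * (d1 + d2 + d3)) by ring.
  exact Hsum.
Qed.

Lemma edist_sqr (P Q : pt) : edist P Q ^ 2 = (fst P - fst Q) ^ 2 + (snd P - snd Q) ^ 2.
Proof. apply pow2_sqrt, Rplus_le_le_0_compat; apply pow2_ge_0. Qed.

Definition eis_norm (x y : Z) : Z := (x * x - x * y + y * y)%Z.

Lemma edist_eis_sqr (x1 y1 x2 y2 : nat) :
  edist (eis x1 y1) (eis x2 y2) ^ 2
  = IZR (eis_norm (Z.of_nat x1 - Z.of_nat x2) (Z.of_nat y1 - Z.of_nat y2)).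
Proof.
  rewrite edist_sqr. unfold eis, eis_norm; simpl fst; simpl snd.
  rewrite !INR_IZR_INZ, plus_IZR, !minus_IZR, !mult_IZR, !minus_IZR.
  replace ((IZR (Z.of_nat y1) * sqrt 3 / 2 - IZR (Z.of_nat y2) * sqrt 3 / 2) ^ 2)
    with (sqrt 3 ^ 2 * (IZR (Z.of_nat y1) - IZR (Z.of_nat y2)) ^ 2 / 4) by field.
  rewrite sqrt3_sqr. field.
Qed.

Lemma eis_origin : eis 0 0 = (0, 0).
Proof. unfold eis. simpl. f_equal; field. Qed.

Lemma tri_area_eis_origin (a1 a2 b1 b2 : nat) :
  tri_area (eis a1 a2) (eis b1 b2) (0, 0)
  = sqrt 3 * IZR (Z.abs (Z.of_nat a1 * Z.of_nat b2 - Z.of_nat a2 * Z.of_nat b1)) / 4.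
Proof.
  unfold tri_area, eis; simpl fst; simpl snd.
  rewrite !INR_IZR_INZ, abs_IZR, minus_IZR, !mult_IZR.
  pose proof sqrt3_pos.
  match goal with |- Rabs ?e / 2 = _ =>
    replace e with (sqrt 3 / 2 * (IZR (Z.of_nat a1) * IZR (Z.of_nat b2)
                                  - IZR (Z.of_nat a2) * IZR (Z.of_nat b1))) by field end.
  rewrite Rabs_mult, (Rabs_pos_eq (sqrt 3 / 2)) by lra. field.
Qed.

Lemma edist_sym (P Q : pt) : edist P Q = edist Q P.
Proof. unfold edist. f_equal. ring. Qed.

Lemma edist_eq0 (P Q : pt) : edist P Q = 0 -> P = Q.
Proof.
  destruct P as [p1 p2], Q as [q1 q2]. unfold edist; simpl. intro H.
  pose proof (pow2_ge_0 (p1 - q1)). pose proof (pow2_ge_0 (p2 - q2)).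
  apply sqrt_eq_0 in H; [|lra].
  f_equal; nra.
Qed.

Lemma nondegenerate_edist_pos (P Q S : pt) :
  nondegenerate P Q S -> 0 < edist P Q /\ 0 < edist Q S /\ 0 < edist S P.
Proof.
  intro ND.
  assert (Hpos : forall X Y, (X = Y -> tri_area P Q S = 0) -> 0 < edist X Y).
  { intros X Y HXY. destruct (Rle_lt_or_eq_dec 0 (edist X Y) (sqrt_pos _)) as [H | H]; [exact H|].
    exfalso. apply ND, HXY, edist_eq0. auto. }
  repeat split; apply Hpos; intros <-; unfold tri_area;
    match goal with |- Rabs ?e / 2 = 0 => replace e with 0 by ring end;
    rewrite Rabs_R0; field.
Qed.

Theorem mainTheorem2 (a1 a2 b1 b2 : nat) :
  let A := eis a1 a2 in
  let B := eis b1 b2 in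
  let C := (0, 0) : pt in
  equable A B C ->
  (exists n : nat, (0 < n)%nat /\ edist A C = sqrt 3 * INR n) /\
  (exists n : nat, (0 < n)%nat /\ edist B C = sqrt 3 * INR n) /\
  (exists n : nat, (0 < n)%nat /\ edist A B = sqrt 3 * INR n).
Proof.
  intros A B C [ND EQ].
  destruct (nondegenerate_edist_pos _ _ _ ND) as (pAB & pBC & pCA).
  rewrite edist_sym in pCA.
  assert (Hsum : rational (sqrt 3 * (edist A C + edist B C + edist A B))).
  { unfold perimeter in EQ. rewrite (edist_sym C A) in EQ.
    replace (edist A C + edist B C + edist A B) with (tri_area A B C) by lra.
    unfold A, B, C. rewrite tri_area_eis_origin. unfold Rdiv.
    rewrite <- !Rmult_assoc, sqrt_sqrt by lra. auto 10 with rational. }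
  assert (Hrot : forall x y z, x + y + z = y + z + x) by (intros; ring).
  assert (eAC := edist_eis_sqr a1 a2 0 0).
  assert (eBC := edist_eis_sqr b1 b2 0 0).
  assert (eAB := edist_eis_sqr a1 a2 b1 b2).
  rewrite eis_origin in eAC, eBC.
  split; [|split].
  - apply (sqrt3_multiple_of_rational_sum _ _ _ _ _ _ pBC pAB pCA eBC eAB eAC).
    rewrite Hrot, Hrot. exact Hsum.
  - apply (sqrt3_multiple_of_rational_sum _ _ _ _ _ _ pAB pCA pBC eAB eAC eBC).
    rewrite Hrot. exact Hsum.
  - exact (sqrt3_multiple_of_rational_sum _ _ _ _ _ _ pCA pBC pAB eAC eBC eAB Hsum).
Qed.
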